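(* For any rooted tree $T$, it is possible to assign pairwise distinct binary strings $\ell(u)$ to all nodes $u\in T$ such that $$|\ell(u)|\le 2+\log_2\big(|T|/(1+\mathsf{deg}(u))\big)$$ for every node $u$.
   Context: $|T|$ is the number of nodes of $T$, $\mathsf{deg}(u)$ is the number of children of $u$, and $|\ell(u)|$ is the length of the string $\ell(u)$. *)

From Stdlib Require Import Reals List Arith.
Import ListNotations.

Inductive tree : Type := Node : list tree -> tree.

Definition children (t : tree) : list tree := match t with Node ts => ts end.

(* Nodes of a tree are identified by their address: the sequence of child
   indices along the path from the root.  [subtree T u] is the subtree rooted
   at node u, or None if u is not an address of a node of T. *)
Fixpoint subtree (t : tree) (u : list nat) : option tree :=
  match u with
  | [] => Some t
  | i :: u' => match nth_error (children t) i with
               | Some c => subtree c u'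
               | None => None
               end
  end.

Definition is_node (T : tree) (u : list nat) : Prop := subtree T u <> None.

Fixpoint tsize (t : tree) : nat :=
  match t with
  | Node ts => S ((fix go (l : list tree) : nat :=
                     match l with [] => 0 | c :: cs => tsize c + go cs end) ts)
  end.

Definition deg (t : tree) : nat := length (children t).

Definition log2R (x : R) : R := ln x / ln 2.

(* Rank the nodes by non-increasing degree (ties broken lexicographically on addresses) and
   label the node of rank r >= 1 by the binary expansion of r without its leading 1, a string
   of length floor(log2 r); distinct ranks give distinct strings.  The r nodes ranked up to u
   all have degree >= deg u, and the sum of 1 + deg v over all nodes is 2|T| - 1, so
   r (1 + deg u) <= 2|T| and |l(u)| <= 1 + log2(|T| / (1 + deg u)). *)

From Stdlib Require Import Reals List Arith Lia Lra PArith.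
Import ListNotations.

Section Rank.

Context {A : Type} (le : A -> A -> bool).
Hypothesis le_total : forall x y, le x y = true \/ le y x = true.
Hypothesis le_trans : forall x y z, le x y = true -> le y z = true -> le x z = true.

Definition rank (L : list A) (v : A) : nat := length (filter (fun w => le w v) L).

Lemma le_refl x : le x x = true.
Proof. now destruct (le_total x x). Qed.

Lemma rank_pos L v : In v L -> 0 < rank L v.
Proof.
  intros Hv. unfold rank.
  assert (Hf : In v (filter (fun w => le w v) L)) by (apply filter_In; auto using le_refl).
  destruct (filter _ L); [contradiction | cbn; lia].
Qed.

Lemma rank_le_mono L u v : le u v = true -> rank L u <= rank L v.
Proof.
  intros Huv. unfold rank. induction L as [|x L IH]; cbn; [lia|].
  destruct (le x u) eqn:Hxu; [rewrite (le_trans x u v Hxu Huv)|destruct (le x v)]; cbn; lia.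
Qed.

Lemma rank_lt L u v : In v L -> le u v = true -> le v u = false -> rank L u < rank L v.
Proof.
  intros Hv Huv Hvu. induction L as [|x L IH]; [contradiction|].
  destruct Hv as [->|Hv].
  - pose proof (rank_le_mono L u v Huv). unfold rank in *; cbn.
    rewrite Hvu, le_refl; cbn; lia.
  - specialize (IH Hv). unfold rank in *; cbn.
    destruct (le x u) eqn:Hxu; [rewrite (le_trans x u v Hxu Huv)|destruct (le x v)]; cbn; lia.
Qed.

Lemma rank_inj L u v :
  In u L -> In v L -> rank L u = rank L v -> le u v = true /\ le v u = true.
Proof.
  intros Hu Hv Heq.
  destruct (le_total u v) as [Huv|Hvu]; [destruct (le v u) eqn:Hvu|destruct (le u v) eqn:Huv];
    auto; [pose proof (rank_lt L u v Hv Huv Hvu)|pose proof (rank_lt L v u Hu Hvu Huv)]; lia.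
Qed.

Lemma rank_mul_le (f : A -> nat) L v :
  (forall w, le w v = true -> f v <= f w) -> rank L v * f v <= list_sum (map f L).
Proof.
  intros Hf. unfold rank, list_sum. induction L as [|x L IH]; cbn; [lia|].
  destruct (le x v) eqn:Hxv; simpl; [specialize (Hf x Hxv)|]; nia.
Qed.

End Rank.

Lemma Nat_compare_trans (x y z : nat) (c : comparison) :
  (x ?= y) = c -> (y ?= z) = c -> (x ?= z) = c.
Proof.
  destruct c; rewrite ?Nat.compare_eq_iff, ?Nat.compare_lt_iff, ?Nat.compare_gt_iff; lia.
Qed.

Notation lex_compare := (list_compare Nat.compare).

Lemma lex_compare_eq u v : lex_compare u v = Eq <-> u = v.
Proof. exact (list_compare_refl _ Nat.compare_eq_iff u v). Qed.

Lemma lex_compare_antisym u v : lex_compare v u = CompOpp (lex_compare u v).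
Proof. exact (list_compare_antisym _ Nat.compare_eq_iff u v Nat.compare_antisym). Qed.

Lemma lex_compare_trans_lt u v w :
  lex_compare u v = Lt -> lex_compare v w = Lt -> lex_compare u w = Lt.
Proof.
  exact (list_compare_trans _ Nat.compare_eq_iff u v w Nat_compare_trans Nat.compare_antisym).
Qed.

Definition lex_leb (u v : list nat) : bool :=
  match lex_compare u v with Gt => false | _ => true end.

Lemma lex_leb_total u v : lex_leb u v = true \/ lex_leb v u = true.
Proof.
  unfold lex_leb. rewrite (lex_compare_antisym u v).
  destruct (lex_compare u v); auto.
Qed.

Lemma lex_leb_antisym u v : lex_leb u v = true -> lex_leb v u = true -> u = v.
Proof.
  unfold lex_leb. rewrite (lex_compare_antisym u v).
  destruct (lex_compare u v) eqn:Huv; try discriminate.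
  intros _ _. now apply lex_compare_eq.
Qed.

Lemma lex_leb_trans u v w : lex_leb u v = true -> lex_leb v w = true -> lex_leb u w = true.
Proof.
  unfold lex_leb.
  destruct (lex_compare u v) eqn:Huv; try discriminate;
  destruct (lex_compare v w) eqn:Hvw; try discriminate; intros _ _.
  - apply lex_compare_eq in Huv, Hvw. subst. now rewrite (proj2 (lex_compare_eq w w) eq_refl).
  - apply lex_compare_eq in Huv. subst. now rewrite Hvw.
  - apply lex_compare_eq in Hvw. subst. now rewrite Huv.
  - now rewrite (lex_compare_trans_lt u v w Huv Hvw).
Qed.

Definition deg_first (x y : list nat * nat) : bool :=
  (snd y <? snd x) || ((snd y =? snd x) && lex_leb (fst x) (fst y)).

Lemma deg_first_spec x y :
  deg_first x y = true <-> snd y < snd x \/ (snd y = snd x /\ lex_leb (fst x) (fst y) = true).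
Proof.
  unfold deg_first. rewrite Bool.orb_true_iff, Bool.andb_true_iff, Nat.ltb_lt, Nat.eqb_eq.
  reflexivity.
Qed.

Lemma deg_first_total x y : deg_first x y = true \/ deg_first y x = true.
Proof.
  rewrite !deg_first_spec.
  destruct (Nat.lt_trichotomy (snd x) (snd y)) as [Hlt|[Heq|Hgt]]; auto.
  destruct (lex_leb_total (fst x) (fst y)); auto.
Qed.

Lemma deg_first_trans x y z :
  deg_first x y = true -> deg_first y z = true -> deg_first x z = true.
Proof.
  rewrite !deg_first_spec.
  intros [Hxy|[Hxy Hlxy]] [Hyz|[Hyz Hlyz]]; try lia.
  right. split; [lia | eapply lex_leb_trans; eauto].
Qed.

Lemma deg_first_antisym x y :
  deg_first x y = true -> deg_first y x = true -> fst x = fst y.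
Proof.
  rewrite !deg_first_spec.
  intros [Hxy|[Hxy Hlxy]] [Hyx|[Hyx Hlyx]]; try lia.
  now apply lex_leb_antisym.
Qed.

Fixpoint tree_nested_ind (P : tree -> Prop)
    (IH : forall ts, Forall P ts -> P (Node ts)) (t : tree) : P t :=
  match t with
  | Node ts => IH ts ((fix all (l : list tree) : Forall P l :=
                        match l with
                        | [] => Forall_nil _
                        | c :: cs => Forall_cons _ (tree_nested_ind P IH c) (all cs)
                        end) ts)
  end.

Lemma tsize_Node ts : tsize (Node ts) = S (list_sum (map tsize ts)).
Proof. unfold list_sum. induction ts as [|c cs IH]; cbn in *; lia. Qed.

Fixpoint index_children (f : tree -> list (list nat * nat)) (i : nat) (ts : list tree)
    : list (list nat * nat) :=
  match ts with
  | [] => []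
  | c :: cs => map (fun e => (i :: fst e, snd e)) (f c) ++ index_children f (S i) cs
  end.

(* Every node once, paired with its number of children; carrying the degree along makes
   [entries_weight] a structural induction. *)
Fixpoint entries (t : tree) : list (list nat * nat) :=
  match t with Node ts => ([], length ts) :: index_children entries 0 ts end.

Lemma entries_weight t : list_sum (map (fun e => 1 + snd e) (entries t)) + 1 = 2 * tsize t.
Proof.
  induction t as [ts IH] using tree_nested_ind.
  assert (Hchildren : forall i, list_sum (map (fun e => 1 + snd e) (index_children entries i ts))
                                + length ts = 2 * list_sum (map tsize ts)).
  { induction IH as [|c cs Hc _ IHcs]; intros i; [reflexivity|].
    cbn [index_children]. rewrite map_app, list_sum_app, map_map. cbn [snd].
    specialize (IHcs (S i)). unfold list_sum in *. cbn in *. lia. }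
  rewrite tsize_Node. specialize (Hchildren 0). unfold list_sum in *. cbn in *. lia.
Qed.

Lemma index_children_In f ts : forall i j c e,
  nth_error ts i = Some c -> In e (f c) -> In (j + i :: fst e, snd e) (index_children f j ts).
Proof.
  induction ts as [|c0 cs IH]; intros [|i] j c e Hc He; try discriminate; cbn in Hc |- *;
    apply in_or_app.
  - injection Hc as <-. left. rewrite Nat.add_0_r. now apply (in_map (fun e => (j :: fst e, snd e))).
  - right. rewrite <- plus_n_Sm. exact (IH i (S j) c e Hc He).
Qed.

Lemma subtree_entries u : forall T t, subtree T u = Some t -> In (u, deg t) (entries T).
Proof.
  induction u as [|i u IH]; intros [ts] t Ht; cbn in Ht |- *.
  - injection Ht as <-. now left.
  - right. destruct (nth_error ts i) as [c|] eqn:Hc; [|discriminate].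
    exact (index_children_In entries ts i 0 c (u, deg t) Hc (IH c t Ht)).
Qed.

Fixpoint pos_bits (p : positive) : list bool :=
  match p with
  | xH => []
  | xO q => false :: pos_bits q
  | xI q => true :: pos_bits q
  end.

Lemma pos_bits_inj p q : pos_bits p = pos_bits q -> p = q.
Proof.
  revert q. induction p; intros [q|q|]; cbn; intros H; try discriminate; auto;
    injection H as H; f_equal; auto.
Qed.

Lemma pow2_length_pos_bits p : 2 ^ length (pos_bits p) <= Pos.to_nat p.
Proof.
  induction p; cbn; rewrite ?Pos2Nat.inj_xI, ?Pos2Nat.inj_xO, ?Pos2Nat.inj_1; lia.
Qed.

Lemma ln_le (x y : R) : (0 < x)%R -> (x <= y)%R -> (ln x <= ln y)%R.
Proof.
  intros Hx [Hlt|Heq]; [left; now apply ln_increasing | right; now rewrite Heq].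
Qed.

Lemma log2R_pow2_mul_bound (k d n : nat) :
  2 ^ k * (1 + d) <= 2 * n -> (INR k <= 1 + log2R (INR n / INR (1 + d)))%R.
Proof.
  intros Hkdn.
  assert (Hd : (0 < INR (1 + d))%R) by (apply lt_0_INR; lia).
  assert (Hn : (0 < INR n)%R) by (apply lt_0_INR; pose proof (Nat.pow_nonzero 2 k); nia).
  assert (Hln2 : (0 < ln 2)%R) by (pose proof ln_lt_2; lra).
  assert (Hpow : (2 ^ k <= 2 * (INR n / INR (1 + d)))%R).
  { apply le_INR in Hkdn. rewrite !mult_INR, pow_INR in Hkdn.
    apply (Rmult_le_reg_r (INR (1 + d))); [exact Hd|].
    unfold Rdiv. rewrite Rmult_assoc, Rmult_assoc, Rinv_l by lra.
    replace (INR 2) with 2%R in Hkdn by reflexivity. lra. }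
  apply ln_le in Hpow; [|apply pow_lt; lra].
  rewrite ln_pow, ln_mult in Hpow by (try apply Rdiv_lt_0_compat; lra).
  unfold log2R. apply (Rmult_le_reg_r (ln 2)); [exact Hln2|].
  unfold Rdiv. rewrite Rmult_plus_distr_r, Rmult_assoc, Rinv_l by lra. lra.
Qed.

Definition deg_at (T : tree) (u : list nat) : nat :=
  match subtree T u with Some t => deg t | None => 0 end.

Lemma is_node_entries T u : is_node T u -> In (u, deg_at T u) (entries T).
Proof.
  unfold is_node, deg_at. destruct (subtree T u) as [t|] eqn:Ht; [|contradiction].
  intros _. exact (subtree_entries u T t Ht).
Qed.

Definition node_rank (T : tree) (u : list nat) : nat :=
  rank deg_first (entries T) (u, deg_at T u).

Lemma node_rank_pos T u : is_node T u -> 0 < node_rank T u.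
Proof. intros Hu. exact (rank_pos deg_first deg_first_total _ _ (is_node_entries T u Hu)). Qed.

Lemma node_rank_inj T u v : is_node T u -> is_node T v -> node_rank T u = node_rank T v -> u = v.
Proof.
  intros Hu Hv Huv.
  destruct (rank_inj deg_first deg_first_total deg_first_trans (entries T) _ _
              (is_node_entries T u Hu) (is_node_entries T v Hv) Huv) as [Huv' Hvu'].
  exact (deg_first_antisym _ _ Huv' Hvu').
Qed.

Lemma node_rank_mul_le T u t :
  subtree T u = Some t -> node_rank T u * (1 + deg t) + 1 <= 2 * tsize T.
Proof.
  intros Ht. pose proof (entries_weight T). unfold node_rank, deg_at. rewrite Ht.
  enough (rank deg_first (entries T) (u, deg t) * (1 + deg t)
          <= list_sum (map (fun e => 1 + snd e) (entries T))) by lia.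
  apply (rank_mul_le deg_first (fun e => 1 + snd e)).
  intros w Hw. apply deg_first_spec in Hw. cbn in *. destruct Hw as [Hw|[Hw _]]; lia.
Qed.

Definition label (T : tree) (u : list nat) : list bool := pos_bits (Pos.of_nat (node_rank T u)).

Lemma label_inj T u v : is_node T u -> is_node T v -> label T u = label T v -> u = v.
Proof.
  intros Hu Hv Huv. apply pos_bits_inj, Nat2Pos.inj in Huv;
    [apply (node_rank_inj T) | apply Nat.neq_0_lt_0, node_rank_pos ..]; assumption.
Qed.

Lemma pow2_length_label T u : is_node T u -> 2 ^ length (label T u) <= node_rank T u.
Proof.
  intros Hu. pose proof (node_rank_pos T u Hu).
  unfold label. rewrite <- (Nat2Pos.id (node_rank T u)) at 2 by lia.
  apply pow2_length_pos_bits.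
Qed.

Theorem lemma9 (T : tree) :
  exists l : list nat -> list bool,
    (forall u v, is_node T u -> is_node T v -> l u = l v -> u = v) /\
    (forall (u : list nat) (t : tree), subtree T u = Some t ->
       (INR (length (l u)) <= 2 + log2R (INR (tsize T) / INR (1 + deg t)))%R).
Proof.
  exists (label T). split; [exact (label_inj T)|].
  intros u t Ht.
  assert (Hu : is_node T u) by (unfold is_node; rewrite Ht; discriminate).
  pose proof (pow2_length_label T u Hu).
  pose proof (node_rank_mul_le T u t Ht).
  assert (Hkey : 2 ^ length (label T u) * (1 + deg t) <= 2 * tsize T) by nia.
  pose proof (log2R_pow2_mul_bound _ _ _ Hkey). lra.
Qed.
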